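(* Let $\Pi$ be a finite, satisfiable set of linear constraints over the variables $x_1,\dots,x_D$ (each of the form $\sum_k w_k x_k + b \unrhd 0$ with $\unrhd\in\{\ge,>\}$), and let $\mathrm{CL}$ be the constraint layer built from $\Pi$ and the variable ordering $x_1,\dots,x_D$ as described in the context. Then for every sample $\tilde x\in\mathbb{R}^D$ (and every admissible choice of the $\epsilon$ values), $\mathrm{CL}(\tilde x)$ satisfies every constraint in $\Pi$. Consequently, for any generative model $m$ producing samples in $\mathbb{R}^D$, the model C-$m$ obtained by applying $\mathrm{CL}$ to every output of $m$ is compliant with $\Pi$, i.e. all samples it generates satisfy $\Pi$.
   Context: A constraint is a linear inequality $\phi:\ \sum_{k=1}^D w_k x_k + b \unrhd 0$ with $w_k,b\in\mathbb{R}$ and $\unrhd\in\{\ge,>\}$; it is strict if $\unrhd$ is $>$. A point $\tilde x\in\mathbb{R}^D$ satisfies $\phi$ if $\sum_k w_k\tilde x_k+b\unrhd 0$, and satisfies a set $\Pi$ if it satisfies every member; $\Pi$ is satisfiable if some point satisfies it. Variable $x_j$ appears positively (resp. negatively) in $\phi$ if $w_j>0$ (resp. $w_j<0$). For a set $\Gamma$ of constraints, $\Gamma^+_j$ (resp. $\Gamma^-_j$) is the subset in which $x_j$ appears positively (resp. negatively). Reduction: for $\phi^1=\sum_k w^1_kx_k+b^1\unrhd^1 0\in\Gamma^-_j$ and $\phi^2=\sum_k w^2_kx_k+b^2\unrhd^2 0\in\Gamma^+_j$, $red_j(\phi^1,\phi^2)$ is $\sum_{k\ne j}(w^1_k|w^2_j|+w^2_k|w^1_j|)x_k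 + b^1|w^2_j|+b^2|w^1_j| \unrhd 0$, where $\unrhd$ is $\ge$ if both $\unrhd^1,\unrhd^2$ are $\ge$, and $>$ otherwise. Sets $\Pi_i$: $\Pi_D=\Pi$, and for $i<D$, with $j=i+1$, $\Pi_i=(\Pi_j\setminus(\Pi^-_j\cup\Pi^+_j))\cup\{red_j(\phi^1,\phi^2):\phi^1\in\Pi^-_j,\phi^2\in\Pi^+_j\}$, where $\Pi^\pm_j$ means $(\Pi_j)^\pm_j$. (Thus only $x_1,\dots,x_i$ occur in $\Pi_i$; we write $\Pi_i^\pm$ for $(\Pi_i)^\pm_i$.) For $\phi=\sum_kw_kx_k+b\unrhd0$ with $w_i\neq0$, let $\varepsilon^\phi_i=-\sum_{k\ne i}(w_k/w_i)x_k-b/w_i$; for $\phi\in\Pi_i$ it depends only on $x_1,\dots,x_{i-1}$, and $\phi\in\Pi_i^+$ is equivalent to $x_i-\varepsilon_i^\phi\unrhd0$, $\phi\in\Pi_i^-$ to $\varepsilon_i^\phi - x_i\unrhd 0$. Constraint layer: given $\tilde x\in\mathbb{R}^D$, $\mathrm{CL}(\tilde x)\in\mathbb{R}^D$ is computed coordinatewise for $i=1,\dots,D$. Let $\varepsilon^\phi_i(\mathrm{CL}(\tilde x))$ denote $\varepsilon^\phi_i$ evaluated at the already computed values $\mathrm{CL}(\tilde x)_1,\dots,\mathrm{CL}(\tilde x)_{i-1}$, and set $ub_i=\min\{\varepsilon^\phi_i(\mathrm{CL}(\tilde x)):\phi\in\Pi_i^-\}$, $lb_i=\max\{\varepsilon^\phi_i(\mathrm{CL}(\tilde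 x)):\phi\in\Pi_i^+\}$ (with $\min\emptyset=+\infty$, $\max\emptyset=-\infty$). Then $\mathrm{CL}(\tilde x)_i=\min^i(\max^i(\tilde x_i,lb_i),ub_i)$, where $\max^i(a,lb_i)$ equals $v=\max(a,lb_i)$ unless some strict $\phi\in\Pi_i^+$ has $v=\varepsilon^\phi_i(\mathrm{CL}(\tilde x))$, in which case it equals $v+\epsilon$ for a chosen $\epsilon>0$ small enough that $lb_i+\epsilon< ub_i$; symmetrically $\min^i(a,ub_i)$ equals $u=\min(a,ub_i)$ unless some strict $\phi\in\Pi_i^-$ has $u=\varepsilon^\phi_i(\mathrm{CL}(\tilde x))$, in which case it equals $u-\epsilon$ for a chosen $\epsilon>0$ small enough that $ub_i-\epsilon>lb_i$. The chosen positive numbers are called the $\epsilon$ values used to compute $\mathrm{CL}(\tilde x)$. *)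

From mathcomp Require Import all_boot all_order all_algebra.
Set Implicit Arguments. Unset Strict Implicit. Unset Printing Implicit Defensive.
Import Order.TTheory GRing.Theory Num.Theory.
Local Open Scope ring_scope.

Section Constraints.
Variables (R : realFieldType) (D : nat).

(* A linear constraint  sum_k w_k x_k + b |> 0 over variables x_0..x_{D-1}
   (0-based indexing; the paper's x_{k+1} is our index k).
   cstrict = true means '>' , false means '>='. *)
Record constr := Constr { cw : 'I_D -> R ; cb : R ; cstrict : bool }.

Definition clhs (phi : constr) (x : 'I_D -> R) : R :=
  \sum_(k < D) cw phi k * x k + cb phi.

Definition csat (phi : constr) (x : 'I_D -> R) : bool :=
  if cstrict phi then 0 < clhs phi x else 0 <= clhs phi x.

Definition sat_set (Pi : seq constr) (x : 'I_D -> R) : bool :=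
  all (fun phi => csat phi x) Pi.

Definition satisfiable (Pi : seq constr) : Prop := exists x, sat_set Pi x.

(* coefficient of variable with (nat) index j; 0 if j >= D *)
Definition wat (phi : constr) (j : nat) : R :=
  if @insub _ (fun k => k < D)%N 'I_D j is Some k then cw phi k else 0.

Definition cpos (j : nat) (G : seq constr) := [seq phi <- G | 0 < wat phi j].
Definition cneg (j : nat) (G : seq constr) := [seq phi <- G | wat phi j < 0].

(* red_j(phi1, phi2), phi1 in G^-_j, phi2 in G^+_j *)
Definition red (j : nat) (phi1 phi2 : constr) : constr :=
  Constr (fun k => if nat_of_ord k == j then 0
                   else cw phi1 k * `|wat phi2 j| + cw phi2 k * `|wat phi1 j|)
         (cb phi1 * `|wat phi2 j| + cb phi2 * `|wat phi1 j|)
         (cstrict phi1 || cstrict phi2).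

Definition fm_elim (j : nat) (G : seq constr) : seq constr :=
  [seq phi <- G | wat phi j == 0] ++
  [seq red j p1 p2 | p1 <- cneg j G, p2 <- cpos j G].

(* FM n Pi = Pi_{D-n}: Pi_D = Pi, Pi_i = elim of variable index i from Pi_{i+1}
   (0-based index i = paper's variable x_{i+1}). *)
Fixpoint FM (Pi : seq constr) (n : nat) : seq constr :=
  match n with
  | 0 => Pi
  | n'.+1 => fm_elim (D - n) (FM Pi n')
  end.

Definition Pis (Pi : seq constr) (i : nat) : seq constr := FM Pi (D - i).

(* epsilon^phi_i evaluated at the already computed values y_0..y_{i-1} *)
Definition epsv (phi : constr) (i : 'I_D) (y : 'I_D -> R) : R :=
  - (\sum_(k < D | (k < i)%N) cw phi k * y k + cb phi) / cw phi i.

Definition seqmax (s : seq R) : option R :=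
  foldr (fun a o => Some (if o is Some b then Num.max a b else a)) None s.
Definition seqmin (s : seq R) : option R :=
  foldr (fun a o => Some (if o is Some b then Num.min a b else a)) None s.

(* y_i is an admissible value of CL(x)_i, given the already computed
   coordinates y_0..y_{i-1} (lb = None means -oo, ub = None means +oo).
   Coordinate i (0-based) is the paper's x_{i+1}, handled with Pi_{i+1}. *)
Definition CL_coord (Pi : seq constr) (x y : 'I_D -> R) (i : 'I_D) : Prop :=
  let P := Pis Pi i.+1 in
  let Lp := cpos i P in
  let Ln := cneg i P in
  let lb := seqmax [seq epsv phi i y | phi <- Lp] in
  let ub := seqmin [seq epsv phi i y | phi <- Ln] in
  let v := if lb is Some l then Num.max (x i) l else x i in
  exists v' : R,
    (if has (fun phi => cstrict phi && (epsv phi i y == v)) Lp then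
       exists e : R, 0 < e /\
         (forall l u, lb = Some l -> ub = Some u -> l + e < u) /\ v' = v + e
     else v' = v) /\
    let u := if ub is Some ub' then Num.min v' ub' else v' in
    (if has (fun phi => cstrict phi && (epsv phi i y == u)) Ln then
       exists e : R, 0 < e /\
         (forall l u0, lb = Some l -> ub = Some u0 -> l < u0 - e) /\ y i = u - e
     else y i = u).

(* y is a possible output CL(x) of the constraint layer, for some admissible
   choice of the epsilon values *)
Definition CL_out (Pi : seq constr) (x y : 'I_D -> R) : Prop :=
  forall i : 'I_D, CL_coord Pi x y i.

Definition Cmodel_sample (Pi : seq constr) (Omega : Type)
  (m : Omega -> 'I_D -> R) (y : 'I_D -> R) : Prop :=
  exists w : Omega, CL_out Pi (m w) y.

Definition compliant (Pi : seq constr) (S : ('I_D -> R) -> Prop) : Prop :=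
  forall y, S y -> sat_set Pi y.

End Constraints.

From mathcomp Require Import all_boot all_order all_algebra.
From mathcomp Require Import ring zify.
Set Implicit Arguments. Unset Strict Implicit. Unset Printing Implicit Defensive.
Import Order.TTheory GRing.Theory Num.Theory.
Local Open Scope ring_scope.

(* Pi_i arises from Pi_(i+1) by Fourier-Motzkin elimination of x_(i+1), so a
   satisfying point of Pi satisfies every Pi_i; in particular the variable-free
   set Pi_0 holds everywhere.  Conversely, assume the first i coordinates of
   CL(x) satisfy Pi_i.  Each reduction red(phi1, phi2) in Pi_i then says that
   the lower bound eps^phi2 on x_(i+1) lies below the upper bound eps^phi1,
   strictly if phi2 is strict, and clamping x_(i+1) between the largest lower
   and the smallest upper bound, nudged by epsilon off strict bounds, meets
   every constraint of Pi_(i+1).  By induction, CL(x) satisfies Pi_D = Pi. *)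

Lemma sub_allI (T : Type) (a1 a2 b : pred T) (s : seq T) :
  (forall x, a1 x -> a2 x -> b x) -> all a1 s -> all a2 s -> all b s.
Proof.
by move=> ab; elim: s => //= x s IH /andP[? ?] /andP[? ?]; rewrite ab ?IH.
Qed.

Lemma all_allpairsE (S T U : Type) (a : pred U) (f : S -> T -> U) s t :
  all a [seq f x y | x <- s, y <- t] = allrel (fun x y => a (f x y)) s t.
Proof. by rewrite allrel_allpairsE -map_allpairs all_map. Qed.

Section SeqMinMax.
Variable R : realFieldType.
Implicit Types (s : seq R) (x m : R).

Lemma seqmax_ge s x : x \in s -> exists2 m, seqmax s = Some m & x <= m.
Proof.
elim: s => //= a s IH; rewrite inE => /predU1P[<-|/IH[m -> le_xm]].
  by eexists; first reflexivity; case: seqmax => [m|]; rewrite ?le_max lexx.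
by exists (Num.max a m); rewrite // le_max le_xm orbT.
Qed.

Lemma seqmin_le s x : x \in s -> exists2 m, seqmin s = Some m & m <= x.
Proof.
elim: s => //= a s IH; rewrite inE => /predU1P[<-|/IH[m -> le_mx]].
  by eexists; first reflexivity; case: seqmin => [m|]; rewrite ?ge_min lexx.
by exists (Num.min a m); rewrite // ge_min le_mx orbT.
Qed.

Lemma seqmin_mem s m : seqmin s = Some m -> m \in s.
Proof.
elim: s m => //= a s IH m [<-]; case E: seqmin => [b|]; last exact: mem_head.
by rewrite inE minEle; case: ifP => _; rewrite ?eqxx // IH ?orbT.
Qed.

End SeqMinMax.

Lemma lteif_le_neq (R : numDomainType) (x y : R) (C : bool) :
  x <= y -> ~~ (C && (x == y)) -> x < y ?<= if ~~ C.
Proof. by case: C => //= le_xy ne_xy; rewrite lt_neqAle ne_xy. Qed.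

Section Clamp.
Variables (R : realFieldType) (T : Type) (e : T -> R) (st : T -> bool).
Variables (Lp Ln : seq T).

Definition clamp_out (a b : R) : Prop :=
  let lb := seqmax [seq e p | p <- Lp] in
  let ub := seqmin [seq e p | p <- Ln] in
  let v := if lb is Some l then Num.max a l else a in
  exists v' : R,
    (if has (fun p => st p && (e p == v)) Lp then
       exists eps : R, 0 < eps /\
         (forall l u, lb = Some l -> ub = Some u -> l + eps < u) /\ v' = v + eps
     else v' = v) /\
    let u := if ub is Some u' then Num.min v' u' else v' in
    (if has (fun p => st p && (e p == u)) Ln then
       exists eps : R, 0 < eps /\
         (forall l u0, lb = Some l -> ub = Some u0 -> l < u0 - eps) /\ b = u - eps
     else b = u).

Lemma clamp_out_upper a b :
  clamp_out a b -> all (fun p => b < e p ?<= if ~~ st p) Ln.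
Proof.
move=> [v' [_]] /=; set u := (if _ is Some _ then _ else _).
have u_le : all (fun p => u <= e p) Ln.
  rewrite -(all_map e (fun x => u <= x)); apply/allP => x /seqmin_le[m Em le_mx].
  by rewrite /u Em ge_min le_mx orbT.
case: ifP => [_ [eps [eps_gt0 [_ ->]]] | /negbT no_hit ->].
  apply: sub_all u_le => p le_up; apply: lteifS; apply: lt_le_trans le_up.
  by rewrite ltrBlDr ltrDl.
rewrite -all_predC in no_hit.
move: u_le no_hit; apply: sub_allI => p le_up /=; rewrite eq_sym.
exact: lteif_le_neq.
Qed.

Lemma clamp_out_lower a b :
  allrel (fun p1 p2 => e p2 < e p1 ?<= if ~~ st p2) Ln Lp ->
  clamp_out a b -> all (fun p => e p < b ?<= if ~~ st p) Lp.
Proof.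
move=> compat [v' [raise]] /=.
set lb := seqmax _ in raise *; set ub := seqmin _ in raise *.
set v := (if lb is Some _ then _ else _) in raise.
have le_lb x : x \in [seq e p | p <- Lp] -> exists2 l, lb = Some l & x <= l.
  exact: seqmax_ge.
have le_v : all (fun p => e p <= v) Lp.
  rewrite -(all_map e (fun x => x <= v)); apply/allP => x /le_lb[l El le_xl].
  by rewrite /v El le_max le_xl orbT.
have lt_v' : all (fun p => e p < v' ?<= if ~~ st p) Lp.
  case: ifP raise => [_ [eps [eps_gt0 [_ ->]]] | /negbT no_hit ->].
    apply: sub_all le_v => p le_pv; apply: lteifS; apply: le_lt_trans le_pv _.
    by rewrite ltrDl.
  rewrite -all_predC in no_hit.
  by move: le_v no_hit; apply: sub_allI => p; exact: lteif_le_neq.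
set u := (if ub is Some _ then _ else _).
case: ifP => [hit [eps [eps_gt0 [lt_lub ->]]] | _ ->].
  have {hit} u_in : u \in [seq e p | p <- Ln].
    by rewrite -has_pred1 has_map; apply: sub_has hit => p /andP[_].
  have [m Em le_mu] : exists2 m, ub = Some m & m <= u := seqmin_le u_in.
  have -> : u = m by apply/le_anti; rewrite le_mu /u Em ge_min lexx orbT.
  suff lt_b : all (fun p => e p < m - eps) Lp by apply: sub_all lt_b => p /lteifS.
  rewrite -(all_map e (fun x => x < m - eps)); apply/allP => x /le_lb[l El le_xl].
  exact: le_lt_trans le_xl (lt_lub l m El Em).
rewrite /u; case Em: ub => [m|] //.
have le_m : all (fun p => e p < m ?<= if ~~ st p) Lp.
  have : all (fun x => all (fun p => e p < x ?<= if ~~ st p) Lp) [seq e p | p <- Ln].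
    by rewrite all_map; exact: compat.
  by move/allP; apply; exact: seqmin_mem.
by move: lt_v' le_m; apply: sub_allI => p; rewrite lteif_minr => ->.
Qed.

End Clamp.

Section Elimination.
Variables (R : realFieldType) (D : nat).
Implicit Types (phi : constr R D) (G Pi : seq (constr R D)) (x y : 'I_D -> R).

Lemma watE phi (k : 'I_D) : wat phi k = cw phi k.
Proof. by rewrite /wat valK. Qed.

Lemma csat_lteif phi x : csat phi x = (0 < clhs phi x ?<= if ~~ cstrict phi).
Proof. by rewrite /csat; case: cstrict. Qed.

Lemma clhs_red j (p1 p2 : constr R D) y : wat p1 j < 0 -> 0 < wat p2 j ->
  clhs (red j p1 p2) y = `|wat p2 j| * clhs p1 y + `|wat p1 j| * clhs p2 y.
Proof.
move=> w1_lt0 w2_gt0; rewrite /clhs /= (ltr0_norm w1_lt0) (gtr0_norm w2_gt0).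
rewrite !mulrDr !mulr_sumr addrACA -big_split /=; congr (_ + _); last ring.
apply: eq_bigr => k _; case: (nat_of_ord k =P j) => [<-|_]; last ring.
by rewrite !watE; ring.
Qed.

Lemma red_sat j (p1 p2 : constr R D) y : wat p1 j < 0 -> 0 < wat p2 j ->
  csat p1 y -> csat p2 y -> csat (red j p1 p2) y.
Proof.
move=> w1_lt0 w2_gt0; rewrite !csat_lteif clhs_red //= negb_or.
have scale (w c : R) C : w != 0 -> 0 < c ?<= if C -> 0 < `|w| * c ?<= if C.
  by move=> w_neq0 c_pos; rewrite -(mulr0 `|w|) lteif_pM2l ?normr_gt0.
move=> /(scale _ _ _ (lt0r_neq0 w2_gt0)) sat1 /(scale _ _ _ (ltr0_neq0 w1_lt0)) sat2.
by apply: lteif_trans sat1 _; rewrite -[X in X < _ ?<= if _]addr0 lteifD2l.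
Qed.

Lemma fm_elim_sat j G y : sat_set G y -> sat_set (fm_elim j G) y.
Proof.
rewrite /sat_set /fm_elim all_cat all_filter => satG; apply/andP; split.
  by apply: sub_all satG => phi /= ->; rewrite implybT.
rewrite all_allpairsE.
apply: (@sub_in_allrel _ _ [pred p | (wat p j < 0) && csat p y]
                       [pred p | (0 < wat p j) && csat p y] (fun _ _ => true)).
- by move=> p1 p2 /andP[w1_lt0 sat1] /andP[w2_gt0 sat2] _; exact: red_sat.
- by rewrite all_filter; apply: sub_all satG => p /= ->; rewrite andbT implybb.
- by rewrite all_filter; apply: sub_all satG => p /= ->; rewrite andbT implybb.
- by rewrite allrelT.
Qed.

Definition vars_below (n : nat) phi : bool :=
  [forall k : 'I_D, (n <= k)%N ==> (cw phi k == 0)].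

Lemma vars_belowP n phi :
  reflect (forall k : 'I_D, (n <= k)%N -> cw phi k = 0) (vars_below n phi).
Proof.
apply: (iffP forallP) => [h k le_nk | h k]; first exact/eqP/(implyP (h k)).
by apply/implyP => /h ->.
Qed.

Lemma vars_belowW m n phi : (m <= n)%N -> vars_below m phi -> vars_below n phi.
Proof.
move=> le_mn /vars_belowP h; apply/vars_belowP => k le_nk.
exact/h/(leq_trans le_mn).
Qed.

Lemma vars_below_fm_elim j G :
  all (vars_below j.+1) G -> all (vars_below j) (fm_elim j G).
Proof.
rewrite /fm_elim all_cat all_filter all_allpairsE => varsG; apply/andP; split.
  apply: sub_all varsG => p /vars_belowP vars_p; apply/implyP => /eqP wj0.
  apply/vars_belowP => k; rewrite leq_eqVlt => /predU1P[jk|]; last exact: vars_p.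
  by rewrite -watE -jk.
apply: (@sub_in_allrel _ _ (vars_below j.+1) (vars_below j.+1) (fun _ _ => true)).
- move=> p1 p2 /vars_belowP vars1 /vars_belowP vars2 _; apply/vars_belowP => k le_jk /=.
  case: eqP => // /eqP ne_kj; have lt_jk : (j < k)%N by rewrite ltn_neqAle eq_sym ne_kj.
  by rewrite vars1 ?vars2 // !mul0r addr0.
- by rewrite all_filter; apply: sub_all varsG => p /= ->; rewrite implybT.
- by rewrite all_filter; apply: sub_all varsG => p /= ->; rewrite implybT.
- by rewrite allrelT.
Qed.

Lemma FM_vars_below Pi n : all (vars_below (D - n)) (FM Pi n).
Proof.
elim: n => [|n IH] /=.
  by apply/allT => phi; apply/vars_belowP => k; rewrite subn0 leqNgt ltn_ord.
apply: vars_below_fm_elim; apply: sub_all IH => phi; apply: vars_belowW; lia.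
Qed.

Lemma Pis_vars_below Pi i : all (vars_below i) (Pis Pi i).
Proof.
by apply: sub_all (FM_vars_below Pi (D - i)) => phi; apply: vars_belowW; lia.
Qed.

Lemma Pis_sat Pi i y : sat_set Pi y -> sat_set (Pis Pi i) y.
Proof.
by move=> satPi; rewrite /Pis; elim: (D - i)%N => //= n; exact: fm_elim_sat.
Qed.

Lemma PisD Pi : Pis Pi D = Pi.
Proof. by rewrite /Pis subnn. Qed.

Lemma Pis_succ Pi i : (i < D)%N -> Pis Pi i = fm_elim i (Pis Pi i.+1).
Proof. by move=> lt_iD; rewrite /Pis -(subnSK lt_iD) /=; congr fm_elim; lia. Qed.

Lemma csat_vars0 phi x y : vars_below 0 phi -> csat phi x = csat phi y.
Proof.
move=> /vars_belowP vars0; have clhsE z : clhs phi z = cb phi.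
  by rewrite /clhs big1 ?add0r // => k _; rewrite vars0 ?mul0r.
by rewrite /csat !clhsE.
Qed.

Lemma clhs_eps (i : 'I_D) phi y : vars_below i.+1 phi -> cw phi i != 0 ->
  clhs phi y = cw phi i * (y i - epsv phi i y).
Proof.
move=> /vars_belowP vars_phi w_neq0; rewrite /clhs /epsv.
rewrite (bigID (fun k : 'I_D => (k < i)%N)) /= [\sum_(k < D | ~~ _) _](bigD1 i) ?ltnn //=.
rewrite [\sum_(k < D | ~~ _ && _) _]big1 ?addr0; first by field.
move=> k /andP[le_ik ne_ki]; rewrite vars_phi ?mul0r //.
by rewrite ltn_neqAle leqNgt le_ik andbT eq_sym.
Qed.

Lemma csat_eps_pos (i : 'I_D) phi y : vars_below i.+1 phi -> 0 < cw phi i ->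
  csat phi y = (epsv phi i y < y i ?<= if ~~ cstrict phi).
Proof.
move=> vars_phi w_gt0; rewrite csat_lteif (clhs_eps y vars_phi) ?lt0r_neq0 //.
by rewrite -(mulr0 (cw phi i)) lteif_pM2l // subr_lteif0r.
Qed.

Lemma csat_eps_neg (i : 'I_D) phi y : vars_below i.+1 phi -> cw phi i < 0 ->
  csat phi y = (y i < epsv phi i y ?<= if ~~ cstrict phi).
Proof.
move=> vars_phi w_lt0; rewrite csat_lteif (clhs_eps y vars_phi) ?ltr0_neq0 //.
by rewrite -(mulr0 (cw phi i)) lteif_nM2l // subr_lteifr0.
Qed.

Lemma csat_red_eps (i : 'I_D) (p1 p2 : constr R D) y :
  vars_below i.+1 p1 -> vars_below i.+1 p2 -> cw p1 i < 0 -> 0 < cw p2 i ->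
  csat (red i p1 p2) y =
    (epsv p2 i y < epsv p1 i y ?<= if ~~ (cstrict p1 || cstrict p2)).
Proof.
move=> vars1 vars2 w1_lt0 w2_gt0.
rewrite csat_lteif clhs_red ?watE // (ltr0_norm w1_lt0) (gtr0_norm w2_gt0).
rewrite (clhs_eps y vars1) ?ltr0_neq0 // (clhs_eps y vars2) ?lt0r_neq0 //.
set e1 := epsv p1 i y; set e2 := epsv p2 i y.
have -> : cw p2 i * (cw p1 i * (y i - e1)) + - cw p1 i * (cw p2 i * (y i - e2))
          = (- cw p1 i * cw p2 i) * (e1 - e2) by ring.
by rewrite -(mulr0 (- cw p1 i * cw p2 i)) lteif_pM2l ?subr_lteif0r // mulr_gt0 ?oppr_gt0.
Qed.

End Elimination.

Section BackSubstitution.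
Variables (R : realFieldType) (D : nat).
Implicit Types (G Pi : seq (constr R D)) (x y : 'I_D -> R).

Lemma CL_coord_clamp Pi x y (i : 'I_D) :
  CL_coord Pi x y i =
  clamp_out (fun p => epsv p i y) (@cstrict R D)
            (cpos i (Pis Pi i.+1)) (cneg i (Pis Pi i.+1)) (x i) (y i).
Proof. by []. Qed.

Lemma fm_elim_clamp_sat (i : 'I_D) G a y :
  all (vars_below i.+1) G -> sat_set (fm_elim i G) y ->
  clamp_out (fun p => epsv p i y) (@cstrict R D) (cpos i G) (cneg i G) a (y i) ->
  sat_set G y.
Proof.
move=> varsG; rewrite /sat_set /fm_elim all_cat all_filter all_allpairsE.
move=> /andP[sat0 sat_red] clamp_y.
have compat : allrel (fun p1 p2 => epsv p2 i y < epsv p1 i y ?<= if ~~ cstrict p2)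
                     (cneg i G) (cpos i G).
  move: sat_red.
  apply: (@sub_in_allrel _ _ [pred p | vars_below i.+1 p && (wat p i < 0)]
                             [pred p | vars_below i.+1 p && (0 < wat p i)]).
  - move=> p1 p2 /andP[vars1 w1_lt0] /andP[vars2 w2_gt0].
    rewrite !watE in w1_lt0 w2_gt0; rewrite csat_red_eps //; apply: lteif_imply.
    by case: (cstrict p1); case: (cstrict p2).
  - by rewrite all_filter; apply: sub_all varsG => p /= -> /=; exact: implybb.
  - by rewrite all_filter; apply: sub_all varsG => p /= -> /=; exact: implybb.
have lower := clamp_out_lower compat clamp_y.
have upper := clamp_out_upper clamp_y.
move: lower upper; rewrite !all_filter => lower upper.
move: (introT and4P (And4 varsG sat0 lower upper)); rewrite -!all_predI.
apply: sub_all => p /= /and4P[vars_p /implyP sat_p /implyP low_p /implyP up_p].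
rewrite watE in sat_p low_p up_p; case: (ltrgt0P (cw p i)) => [w_gt0|w_lt0|w0].
- by rewrite (csat_eps_pos y vars_p w_gt0); exact: low_p.
- by rewrite (csat_eps_neg y vars_p w_lt0); exact: up_p.
- by apply: sat_p; rewrite w0.
Qed.

Lemma CL_out_Pis_sat Pi x0 x y : sat_set Pi x0 -> CL_out Pi x y ->
  forall i, (i <= D)%N -> sat_set (Pis Pi i) y.
Proof.
move=> sat_x0 CL_y; elim=> [_|i IH lt_iD].
  move: (Pis_vars_below Pi 0) (Pis_sat 0 sat_x0); apply: sub_allI => phi vars0.
  by rewrite (csat_vars0 _ y vars0).
pose j : 'I_D := Ordinal lt_iD.
apply: (@fm_elim_clamp_sat j _ (x j)); first exact: Pis_vars_below.
  by rewrite -Pis_succ //; exact: IH (ltnW lt_iD).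
by rewrite -CL_coord_clamp; exact: CL_y.
Qed.

End BackSubstitution.

Theorem theorem1 (R : realFieldType) (D : nat) (Pi : seq (constr R D)) :
  satisfiable Pi ->
  (forall x y : 'I_D -> R, CL_out Pi x y -> sat_set Pi y) /\
  (forall (Omega : Type) (m : Omega -> 'I_D -> R),
      compliant Pi (Cmodel_sample Pi m)).
Proof.
move=> [x0 sat_x0].
have CL_sat x y : CL_out Pi x y -> sat_set Pi y.
  by move=> CL_y; rewrite -(PisD Pi); exact: CL_out_Pis_sat sat_x0 CL_y D (leqnn D).
by split=> // Omega m y [w]; exact: CL_sat.
Qed.
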